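(* Let $l\ge 2$ be an even integer and let $G=(V,E)$ be a finite, simple, undirected, connected graph whose vertex set is the disjoint union of $l$ sets $\mathcal{C}_1,\dots,\mathcal{C}_l$, where each $\mathcal{C}_j$ induces a complete graph (clique) and all these cliques are identical (same number of vertices, at least two), arranged in a circle: for each $j$ (indices modulo $l$) there is exactly one edge between $\mathcal{C}_j$ and $\mathcal{C}_{j+1}$, and there are no other edges between distinct cliques. Let $\Pi_1=\{\mathcal{C}_1,\dots,\mathcal{C}_l\}$ and let $\Pi_2=\{\mathcal{C}_1\cup\mathcal{C}_2,\ \mathcal{C}_3\cup\mathcal{C}_4,\dots,\mathcal{C}_{l-1}\cup\mathcal{C}_l\}$ be the partition into the $l/2$ pairs of adjacent cliques. Then $\mathcal{P}^{\star}_{\Pi_1}>\mathcal{P}^{\star}_{\Pi_2}$.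
   Context: For a subset $\mathcal{C}\subseteq V$, let $m_i(\mathcal{C})$ be the number of edges with both endpoints in $\mathcal{C}$ and $m_e(\mathcal{C})$ the number of edges with exactly one endpoint in $\mathcal{C}$. The null-adjusted persistence of $\mathcal{C}$ is $\mathcal{P}^{\star}_{\mathcal{C}}=\frac{2m_i}{2m_i+m_e}-\frac{2m_i+m_e}{2m}$, where $m=|E|$. For a partition $\Pi$ of $V$, the total null-adjusted persistence is $\mathcal{P}^{\star}_{\Pi}=\sum_{\mathcal{C}\in\Pi}\mathcal{P}^{\star}_{\mathcal{C}}$. *)

From HB Require Import structures.
From mathcomp Require Import all_boot all_order all_algebra.
Set Implicit Arguments. Unset Strict Implicit. Unset Printing Implicit Defensive.
Import Order.TTheory GRing.Theory Num.Theory.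

(* A simple undirected graph on a finite vertex type V is given by a
   symmetric irreflexive relation e. Its edge set E consists of the
   unordered pairs {u, v} with e u v. *)
Section Persistence.
Variables (V : finType) (e : rel V).

Definition edges : {set {set V}} := [set [set u; v] | u in V, v in V & e u v].

Definition m_tot : nat := #|edges|.
Definition m_int (C : {set V}) : nat := #|[set A in edges | A \subset C]|.
Definition m_ext (C : {set V}) : nat := #|[set A in edges | #|A :&: C| == 1]|.

Local Open Scope ring_scope.

Definition persist (C : {set V}) : rat :=
  (2 * (m_int C)%:R) / (2 * (m_int C)%:R + (m_ext C)%:R)
  - (2 * (m_int C)%:R + (m_ext C)%:R) / (2 * (m_tot)%:R).

Definition persist_part (Pi : {set {set V}}) : rat :=
  \sum_(C in Pi) persist C.

End Persistence.

From HB Require Import structures.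
From mathcomp Require Import all_boot all_order all_algebra.
From mathcomp Require Import ring lra zify.
Import Order.TTheory GRing.Theory Num.Theory.
Set Implicit Arguments. Unset Strict Implicit. Unset Printing Implicit Defensive.

(* Count ordered pairs of adjacent vertices: if arcs A B is the number of
   (u, v) in A x B with e u v, then 2 m_i(C) = arcs C C and
   m_e(C) = arcs C ~C, so 2 m_i(C) + m_e(C) is the volume arcs C V.  The
   null-model term vol(C) / 2m is additive over disjoint unions, so merging
   two cliques C, C' of size k joined by one edge only changes the first
   term, from K/a + K/b to (2K + 2)/(a + b), where K = k(k-1) >= 2 and
   a, b > 0 are the volumes; the difference is
   (K(a - b)^2 + 2(K - 1)ab) / (ab(a + b)) > 0.  Summing over the l/2
   merged pairs gives the claim. *)

Lemma set2_eqE (T : finType) (a b u v : T) : a != b ->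
  ([set a; b] == [set u; v]) = ((a, b) == (u, v)) || ((a, b) == (v, u)).
Proof.
move=> ab; apply/eqP/idP => [E|/orP[]/eqP[-> ->] //]; last by rewrite setUC.
have := set21 a b; have := set22 a b; rewrite E => /set2P[] bE /set2P[] aE;
  by move: ab; rewrite aE bE !eqxx ?orbT.
Qed.

Lemma cards2I (T : finType) (u v : T) (C : {set T}) : u != v ->
  #|[set u; v] :&: C| = (u \in C) + (v \in C).
Proof.
move=> uv; have uniq_uv : uniq [:: u; v] by rewrite /= inE uv.
have -> : (u \in C) + (v \in C) = count (mem C) [:: u; v] by rewrite /= addn0.
rewrite -size_filter -(card_uniqP (filter_uniq _ uniq_uv)); apply: eq_card => x.
by rewrite !inE mem_filter !inE andbC.
Qed.

Section Arcs.
Variables (V : finType) (e : rel V).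

Definition arcs (A B : {set V}) : nat :=
  #|[set p : V * V | [&& p.1 \in A, p.2 \in B & e p.1 p.2]]|.

Lemma arcsUr (A B D : {set V}) :
  [disjoint B & D] -> arcs A (B :|: D) = arcs A B + arcs A D.
Proof.
move=> dis_BD; rewrite /arcs -(cardsID [set p : V * V | p.2 \in B]).
congr (_ + _); apply: eq_card => -[u v]; rewrite !inE /=.
  by case: (v \in B); rewrite ?andbF ?andbT.
have [vB|] := boolP (v \in B) => //=.
by rewrite (disjointFr dis_BD vB) !andbF.
Qed.

Lemma arcs_clique (A : {set V}) :
    irreflexive e -> {in A &, forall u v, u != v -> e u v} ->
  arcs A A = #|A| * #|A|.-1.
Proof.
move=> e_irr A_clique; rewrite /arcs.
have -> : [set p : V * V | [&& p.1 \in A, p.2 \in A & e p.1 p.2]]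
          = setX A A :\: [set (v, v) | v in A].
  apply/setP => -[u v]; rewrite !inE /=.
  have [<-|uv] := eqVneq u v.
    rewrite e_irr !andbF; have [uA|] := boolP (u \in A); rewrite ?andbF //.
    by rewrite (imset_f (fun w => (w, w)) uA).
  have [uA|] := boolP (u \in A); have [vA|] := boolP (v \in A);
    rewrite ?andbF //=.
  rewrite A_clique // andbT; apply/esym/imsetP => -[w _ [uw vw]].
  by rewrite uw vw eqxx in uv.
rewrite cardsD cardsX (setIidPr _); last first.
  by apply/subsetP => _ /imsetP[w wA ->]; rewrite inE /= wA.
rewrite card_imset => [|x y [] //].
by rewrite -subn1 mulnBr muln1.
Qed.

Hypotheses (e_sym : symmetric e) (e_irr : irreflexive e).

Lemma arc_neq (u v : V) : e u v -> u != v.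
Proof. by apply: contraTneq => ->; rewrite e_irr. Qed.

Lemma arcsC (A B : {set V}) : arcs A B = arcs B A.
Proof.
rewrite /arcs -(card_imset _ (can_inj (@swap_pairK V V))).
apply: eq_card => -[u v].
rewrite inE /=; apply/imsetP/idP => [[[a b]]|].
  by rewrite inE /= => /and3P[aA bB ab] [-> ->]; rewrite aA bB e_sym.
by move=> /and3P[uB vA uv]; exists (v, u); rewrite // inE /= uB vA e_sym.
Qed.

Lemma arcsUl (A B D : {set V}) :
  [disjoint A & B] -> arcs (A :|: B) D = arcs A D + arcs B D.
Proof. by move=> dis_AB; rewrite !(arcsC _ D) arcsUr. Qed.

Lemma edgesP (E : {set V}) :
  reflect (exists u v, e u v /\ E = [set u; v]) (E \in edges e).
Proof.
apply: (iffP imset2P) => [[u v _]|[u [v [uv ->]]]].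
  by rewrite inE => uv ->; exists u, v.
by apply: (@Imset2spec _ _ _ _ _ _ _ u v); rewrite ?inE.
Qed.

Lemma card_arcs_edges (P : pred {set V}) :
  #|[set p : V * V | e p.1 p.2 & P [set p.1; p.2]]|
  = 2 * #|[set E in edges e | P E]|.
Proof.
rewrite -sum1_card (partition_big (fun p : V * V => [set p.1; p.2])
                      [in [set E in edges e | P E]]) /=; last first.
  move=> [u v]; rewrite !inE => /andP[uv ->]; rewrite andbT.
  by apply/edgesP; exists u, v.
rewrite mulnC -sum_nat_const; apply: eq_bigr => E /[!inE].
case/andP=> /edgesP[u [v [uv ->]]] Puv.
rewrite sum1dep_card (_ : 2 = #|[set (u, v); (v, u)]|); last first.
  by rewrite cards2 xpair_eqE (negbTE (arc_neq uv)).
apply: eq_card => -[a b]; rewrite !inE /=.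
have [ab|nab] := boolP (e a b) => /=.
  rewrite set2_eqE ?arc_neq //; case: eqP => [[-> ->]|_]; first by rewrite Puv.
  by case: eqP => [[-> ->]|_]; rewrite ?andbF // setUC Puv.
by apply/esym/negbTE; apply: contra nab => /orP[]/eqP[-> ->]; rewrite // e_sym.
Qed.

Lemma m_int_arcs (C : {set V}) : 2 * m_int e C = arcs C C.
Proof.
rewrite /m_int -(card_arcs_edges (fun E => E \subset C)) /arcs.
apply: eq_card => -[u v].
by rewrite !inE /= subUset !sub1set andbC -andbA.
Qed.

Lemma m_ext_arcs (C : {set V}) : m_ext e C = arcs C (~: C).
Proof.
apply/eqP; rewrite -(eqn_pmul2l (isT : 0 < 2)) /m_ext -card_arcs_edges.
rewrite mul2n -addnn {2}arcsC /arcs -(cardsID [set p : V * V | p.1 \in C]).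
apply/eqP; congr (_ + _); apply: eq_card => -[u v]; rewrite !inE /=;
  have [uv|] := boolP (e u v); rewrite ?andbF // cards2I ?arc_neq //;
  by case: (u \in C); case: (v \in C).
Qed.

Lemma arcs_setT (C : {set V}) : arcs C setT = arcs C C + arcs C (~: C).
Proof. by rewrite -(setUCr C) arcsUr // -subsets_disjoint. Qed.

End Arcs.

Lemma big_nat_pairs (R : Type) (idx : R) (op : Monoid.law idx)
    (F : nat -> R) n :
  \big[op/idx]_(0 <= j < 2 * n) F j
  = \big[op/idx]_(0 <= i < n) op (F (2 * i)) (F (2 * i).+1).
Proof.
elim: n => [|n IH]; first by rewrite muln0 !big_geq.
by rewrite mulnS !add2n !big_nat_recr //= IH Monoid.mulmA.
Qed.

Section NullAdjustedPersistence.
Local Open Scope ring_scope.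

Lemma ltr_merge_ratio (R : realFieldType) (K a b : R) :
  1 < K -> 0 < a -> 0 < b -> (2 * K + 2) / (a + b) < K / a + K / b.
Proof.
move=> K_gt1 a_gt0 b_gt0; have ab_gt0 : 0 < a + b by rewrite addr_gt0.
rewrite -subr_gt0.
have -> : K / a + K / b - (2 * K + 2) / (a + b)
          = (K * (a - b) ^+ 2 + 2 * (K - 1) * a * b) / (a * b * (a + b)).
  by field; rewrite ?gt_eqF.
rewrite divr_gt0 ?mulr_gt0 //.
have : 0 <= K * (a - b) ^+ 2 by rewrite mulr_ge0 ?sqr_ge0 //; lra.
have : 0 < 2 * (K - 1) * a * b by rewrite !mulr_gt0 // subr_gt0.
lra.
Qed.

Variables (V : finType) (e : rel V).

Lemma persist_part_fibres (f : V -> nat) n :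
    (forall i, (i < n)%N -> exists v, f v = i) ->
  persist_part e [set [set v | f v == i] | i : 'I_n]
  = \sum_(0 <= i < n) persist e [set v | f v == i].
Proof.
move=> f_onto; rewrite /persist_part big_imset /= ?big_mkord //.
move=> i j _ _ eq_ij.
have [v fv] := f_onto i (ltn_ord i).
have : v \in [set v | f v == i] by rewrite inE fv.
by rewrite eq_ij inE fv => /eqP/val_inj.
Qed.

Hypotheses (e_sym : symmetric e) (e_irr : irreflexive e).

Lemma persist_arcs (C : {set V}) :
  persist e C = (arcs e C C)%:R / (arcs e C setT)%:R
                - (arcs e C setT)%:R / (2 * (m_tot e)%:R).
Proof.
rewrite /persist arcs_setT -(m_int_arcs e_sym e_irr) -(m_ext_arcs e_sym e_irr).
by rewrite natrD natrM.
Qed.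

Lemma persist_setU_lt (A B : {set V}) (K : nat) :
    [disjoint A & B] -> (1 < K)%N -> arcs e A A = K -> arcs e B B = K ->
    arcs e A B = 1%N ->
  persist e (A :|: B) < persist e A + persist e B.
Proof.
move=> dis_AB K_gt1 AA_K BB_K AB_1.
have vol_gt0 X : arcs e X X = K -> 0 < (arcs e X setT)%:R :> rat.
  by rewrite ltr0n arcs_setT => ->; lia.
have ABAB : arcs e (A :|: B) (A :|: B) = (2 * K + 2)%N.
  by rewrite arcsUl // !arcsUr // (arcsC e_sym B A) AB_1 AA_K BB_K; lia.
have K_gt1' : 1 < K%:R :> rat by rewrite ltr1n.
have := ltr_merge_ratio K_gt1' (vol_gt0 _ AA_K) (vol_gt0 _ BB_K).
rewrite !persist_arcs ABAB arcsUl // AA_K BB_K.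
rewrite (natrD _ (2 * K)) natrM natrD !mulrDl.
lra.
Qed.

End NullAdjustedPersistence.

Section CliqueRing.
Variables (l k : nat) (V : finType) (e : rel V) (c : V -> 'I_l).
Hypotheses (k_gt0 : (0 < k)%N)
  (clique_card : forall j : 'I_l, #|[set v | c v == j]| = k).

Definition clique (n : nat) : {set V} := [set v | (c v : nat) == n].

Lemma card_clique n : (n < l)%N -> #|clique n| = k.
Proof.
move=> n_lt_l; rewrite -(clique_card (Ordinal n_lt_l)).
by apply: eq_card => v; rewrite !inE -val_eqE.
Qed.

Lemma clique_onto n : (n < l)%N -> exists v, (c v : nat) = n.
Proof.
move=> n_lt_l; have : (0 < #|clique n|)%N by rewrite card_clique.
by case/card_gt0P => v; rewrite inE => /eqP; exists v.
Qed.

Lemma clique_pairE i :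
  [set v | ((c v)./2 == i)%N] = clique (2 * i)%N :|: clique (2 * i).+1.
Proof. by apply/setP => v; rewrite !inE; lia. Qed.

Lemma persist_part_cliques : ~~ odd l ->
  persist_part e [set [set v | c v == j] | j : 'I_l]
  = (\sum_(0 <= i < l./2)
      (persist e (clique (2 * i)%N) + persist e (clique (2 * i).+1)))%R.
Proof.
move=> l_even; have l_half : (2 * l./2)%N = l.
  by rewrite mul2n halfK (negbTE l_even) subn0.
have -> : [set [set v | c v == j] | j : 'I_l] = [set clique j | j : 'I_l].
  by apply: eq_imset => j; apply/setP => v; rewrite !inE -val_eqE.
rewrite (persist_part_fibres e (f := fun v => nat_of_ord (c v))) //.
  by rewrite -(big_nat_pairs _ (fun n => persist e (clique n))) l_half.
exact: clique_onto.
Qed.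

Lemma persist_part_clique_pairs :
  persist_part e [set [set v | ((c v)./2 == i)%N] | i : 'I_(l./2)]
  = (\sum_(0 <= i < l./2) persist e (clique (2 * i)%N :|: clique (2 * i).+1))%R.
Proof.
rewrite (persist_part_fibres e (f := fun v => (c v)./2)) => [|i i_lt].
  by apply: eq_bigr => i _; rewrite clique_pairE.
have [v cv] := @clique_onto (2 * i)%N ltac:(lia).
by exists v; rewrite cv; lia.
Qed.

Hypotheses (e_irr : irreflexive e)
  (clique_complete : forall u v : V, c u = c v -> u != v -> e u v)
  (ring_edge : forall j : 'I_l,
     #|[set p : V * V | [&& c p.1 == j, (c p.2 : nat) == (j.+1 %% l)%N
                          & e p.1 p.2]]| = 1%N).

Lemma clique_arcs n :
  (n < l)%N -> arcs e (clique n) (clique n) = (k * k.-1)%N.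
Proof.
move=> n_lt_l; rewrite arcs_clique ?card_clique //.
move=> u v /[!inE] /eqP cu /eqP cv.
by apply: clique_complete; apply: val_inj; rewrite /= cu cv.
Qed.

Lemma next_clique_arcs n :
  (n.+1 < l)%N -> arcs e (clique n) (clique n.+1) = 1%N.
Proof.
move=> n_lt; have n_lt' := ltnW n_lt.
rewrite -[RHS](ring_edge (Ordinal n_lt')); apply: eq_card => -[u v].
by rewrite !inE /= -val_eqE /= modn_small.
Qed.

End CliqueRing.

Theorem proposition4 (l k : nat) (V : finType) (e : rel V) (c : V -> 'I_l) :
  (2 <= l)%N -> ~~ odd l -> (2 <= k)%N ->
  symmetric e -> irreflexive e ->
  (forall u v : V, connect e u v) ->
  (* all cliques have the same size k >= 2 *)
  (forall j : 'I_l, #|[set v | c v == j]| = k) ->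
  (* each C_j induces a complete graph *)
  (forall u v : V, c u = c v -> u != v -> e u v) ->
  (* exactly one edge between C_j and C_{j+1 mod l} *)
  (forall j : 'I_l,
     #|[set p : V * V | [&& c p.1 == j, (c p.2 : nat) == (j.+1 %% l)%N
                          & e p.1 p.2]]| = 1%N) ->
  (* no other edges between distinct cliques *)
  (forall u v : V, e u v -> c u != c v ->
     ((c v : nat) == ((c u).+1 %% l)%N) || ((c u : nat) == ((c v).+1 %% l)%N)) ->
  (persist_part e [set [set v | c v == j] | j : 'I_l]
   > persist_part e [set [set v | ((c v)./2 == j)%N] | j : 'I_(l./2)])%R.
Proof.
move=> l_ge2 l_even k_ge2 e_sym e_irr _ clique_card clique_complete ring_edge _.
have k_gt0 : (0 < k)%N by lia.
rewrite (persist_part_cliques e k_gt0 clique_card l_even).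
rewrite (persist_part_clique_pairs e k_gt0 clique_card).
apply: ltr_sum_nat => [|i /andP[_ i_lt]]; first lia.
have disj : [disjoint clique c (2 * i)%N & clique c (2 * i).+1].
  by rewrite -setI_eq0; apply/eqP/setP => v; rewrite !inE; lia.
apply: (persist_setU_lt e_sym e_irr disj (K := (k * k.-1)%N)); first nia.
- by rewrite (clique_arcs clique_card) //; lia.
- by rewrite (clique_arcs clique_card) //; lia.
- by rewrite (next_clique_arcs ring_edge) //; lia.
Qed.
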